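(* Let $n\geq 1$ and $m\geq 2$. The perfect matchings $M_1=E_1\cup E_3\cup\cdots\cup E_{2m-1}$ and $M_2=E_2\cup E_4\cup\cdots\cup E_{2m}$ of $T(2n+1,2m)$ lie in different components of the total resonance graph $R_t(T(2n+1,2m))$.
   Context: $T(2n+1,2m)$ is the graph of the quadriculated torus with $2n+1$ rows and $2m$ columns: vertices $(u_i,v_j)$ for $i\in\mathbb{Z}_{2m}$ (indices $1,\dots,2m$ mod $2m$) and $j\in\mathbb{Z}_{2n+1}$, with $(u_i,v_j)$ adjacent to $(u_{i+1},v_j)$ and to $(u_i,v_{j+1})$; it is cellularly embedded in the torus with faces the $4$-cycles $(u_i,v_j)(u_{i+1},v_j)(u_{i+1},v_{j+1})(u_i,v_{j+1})$. For $1\le i\le 2m$, $E_i=\{(u_i,v_j)(u_{i+1},v_j): 1\le j\le 2n+1\}$ (index $i+1$ mod $2m$). The total resonance graph $R_t(G)$ has the perfect matchings of $G$ as vertices, two perfect matchings $M,M'$ being adjacent iff $M\oplus M'$ is exactly the boundary of one face. *)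

From mathcomp Require Import all_boot.
Set Implicit Arguments. Unset Strict Implicit. Unset Printing Implicit Defensive.

(* A vertex (u_i, v_j) is encoded as the pair
   (i, j) : 'I_(2m) * 'I_(2n+1), with the paper's index i in {1..2m} encoded
   0-based as i-1 (similarly j).  Edges are 2-element vertex sets. *)
Section Torus.
Variables m n : nat.

Definition tvert := ('I_(2 * m) * 'I_(2 * n + 1))%type.

Definition hedge (x : tvert) : {set tvert} := [set x; (ordS x.1, x.2)].
Definition vedge (x : tvert) : {set tvert} := [set x; (x.1, ordS x.2)].

Definition tedges : {set {set tvert}} :=
  [set hedge x | x in [set: tvert]] :|: [set vedge x | x in [set: tvert]].

Definition face (x : tvert) : {set {set tvert}} :=
  [set hedge x; vedge (ordS x.1, x.2); hedge (x.1, ordS x.2); vedge x].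

Definition tfaces : {set {set {set tvert}}} := [set face x | x in [set: tvert]].

Definition perfect_matching (M : {set {set tvert}}) : bool :=
  (M \subset tedges) && [forall v : tvert, #|[set e in M | v \in e]| == 1].

Definition Rt_adj : rel {set {set tvert}} := fun M M' =>
  [&& perfect_matching M, perfect_matching M' &
      ((M :\: M') :|: (M' :\: M)) \in tfaces].

(* E_k (paper's index k in {1..2m}, encoded 0-based as k-1) *)
Definition Eset (k : 'I_(2 * m)) : {set {set tvert}} :=
  [set hedge (k, j) | j in [set: 'I_(2 * n + 1)]].

(* M_1 = E_1 ∪ E_3 ∪ ... ∪ E_{2m-1}: 0-based even indices *)
Definition M1 : {set {set tvert}} := \bigcup_(k : 'I_(2 * m) | ~~ odd k) Eset k.
(* M_2 = E_2 ∪ E_4 ∪ ... ∪ E_{2m}: 0-based odd indices *)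
Definition M2 : {set {set tvert}} := \bigcup_(k : 'I_(2 * m) | odd k) Eset k.

End Torus.
Arguments M1 : clear implicits.
Arguments M2 : clear implicits.
Arguments Rt_adj : clear implicits.
Arguments perfect_matching : clear implicits.

From mathcomp Require Import all_boot zify.
Set Implicit Arguments. Unset Strict Implicit. Unset Printing Implicit Defensive.

(* The parity of |E_1 ∩ M| is invariant along the edges of R_t: if M ⊕ M' is
   the boundary of a face, then E_1 ∩ (M ⊕ M') = (E_1 ∩ M) ⊕ (E_1 ∩ M') and a
   face boundary meets E_1 in no edge or in two parallel ones.  But M_1
   contains all 2n+1 edges of E_1 and M_2 none of them. *)

Lemma odd_card_symD (T : finType) (A B : {set T}) :
  odd #|(A :\: B) :|: (B :\: A)| = odd #|A| (+) odd #|B|.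
Proof.
have disjD : (A :\: B) :&: (B :\: A) = set0.
  by apply/setP => x; rewrite !inE; case: (x \in A); rewrite ?andbF.
rewrite cardsU disjD cards0 subn0 -(cardsID B A) -(cardsID A B) setIC !oddD.
by case: (odd _); case: (odd _); case: (odd _).
Qed.

Lemma odd_card_setI_symD (T : finType) (E A B : {set T}) :
  odd #|E :&: ((A :\: B) :|: (B :\: A))| = odd #|E :&: A| (+) odd #|E :&: B|.
Proof.
rewrite -odd_card_symD.
suff -> : E :&: ((A :\: B) :|: (B :\: A)) = (E :&: A :\: E :&: B) :|: (E :&: B :\: E :&: A) by [].
by apply/setP => x; rewrite !inE; case: (x \in E).
Qed.

Lemma ordS_neq N (k : 'I_N) : 1 < N -> ordS k != k.
Proof.
move=> N_gt1; apply/eqP => /(congr1 val) /= kS_mod.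
have := divn_eq k.+1 N; rewrite kS_mod.
by case: (k.+1 %/ N) => [|q]; nia.
Qed.

Lemma ordSS_neq N (k : 'I_N) : 2 < N -> ordS (ordS k) != k.
Proof.
move=> N_gt2; apply/eqP => /(congr1 val) /=; rewrite -addn1 modnDml addn1 => kSS_mod.
have := divn_eq k.+2 N; rewrite kSS_mod.
by case: (k.+2 %/ N) => [|q]; nia.
Qed.

Lemma odd_ordS m (k : 'I_(2 * m)) : odd (ordS k) = ~~ odd k.
Proof. by rewrite /= odd_mod // oddM. Qed.

Section TotalResonance.

Variables m n : nat.
Implicit Types (x y : tvert m n) (z k : 'I_(2 * m)) (M : {set {set tvert m n}}).
Local Notation Eset := (@Eset m n).

Lemma perfect_matching_bigcup_Eset (P : pred 'I_(2 * m)) :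
  (forall k, P (ordS k) = ~~ P k) -> perfect_matching m n (\bigcup_(k | P k) Eset k).
Proof.
move=> P_ordS; apply/andP; split.
  apply/subsetP => _ /bigcupP[k _ /imsetP[j _ ->]].
  by rewrite inE; apply/orP; left; apply/imset_f.
apply/forallP => -[i j]; apply/eqP.
pose k0 := if P i then i else ord_pred i.
have P_k0 : P k0 by rewrite /k0; case: ifP => // /negbT; rewrite -{1}(ord_predK i) P_ordS negbK.
suff -> : [set e in \bigcup_(k | P k) Eset k | (i, j) \in e] = [set hedge (k0, j)].
  exact: cards1.
apply/setP => e; rewrite !inE; apply/andP/eqP => [|->].
  case=> /bigcupP[k P_k /imsetP[j' _ ->]]; rewrite /k0 !inE.
  by case/orP => /eqP[-> ->]; rewrite ?P_k // P_ordS P_k ordSK.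
split; first by apply/bigcupP; exists k0 => //; apply/imset_f.
by rewrite /k0 !inE; case: ifP; rewrite ?ord_predK eqxx ?orbT.
Qed.

Lemma perfect_matching_M1 : perfect_matching m n (M1 m n).
Proof. by apply: perfect_matching_bigcup_Eset => k; rewrite odd_ordS. Qed.

Lemma perfect_matching_M2 : perfect_matching m n (M2 m n).
Proof. by apply: perfect_matching_bigcup_Eset => k; rewrite odd_ordS. Qed.

Hypothesis m_gt1 : 1 < m.
Hypothesis n_gt0 : 0 < n.

Let two_m_gt2 : 2 < 2 * m. Proof. lia. Qed.
Let two_n1_gt1 : 1 < 2 * n + 1. Proof. lia. Qed.

Lemma hedge_inj : injective (@hedge m n).
Proof.
move=> [x1 x2] [y1 y2] hxy.
have : (y1, y2) \in hedge (x1, x2) by rewrite hxy !inE eqxx.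
have : (x1, x2) \in hedge (y1, y2) by rewrite -hxy !inE eqxx.
rewrite !inE !xpair_eqE /= => /orP[/andP[/eqP -> /eqP ->] // | /andP[/eqP -> /eqP ->]].
case/orP => /andP[/eqP/esym/eqP loop _].
  by rewrite (negbTE (ordS_neq _ (ltnW two_m_gt2))) in loop.
by rewrite (negbTE (ordSS_neq _ two_m_gt2)) in loop.
Qed.

Lemma vedge_neq_hedge x y : vedge y != hedge x.
Proof.
apply/eqP => hxy.
have row_x v : v \in hedge x -> v.2 = x.2 by rewrite !inE => /orP[] /eqP ->.
have := row_x (y.1, ordS y.2); have := row_x y; rewrite -hxy !inE !eqxx orbT /=.
by move=> /(_ isT) <- /(_ isT) /eqP; apply/negP/ordS_neq.
Qed.

Lemma mem_Eset_hedge z y : (hedge y \in Eset z) = (y.1 == z).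
Proof.
apply/imsetP/eqP => [[j _ /hedge_inj -> //] | <-].
by exists y.2 => //; case: y.
Qed.

Lemma vedge_notin_Eset z y : vedge y \notin Eset z.
Proof. by apply/imsetP => -[j _ /eqP]; apply/negP/vedge_neq_hedge. Qed.

Lemma Eset_face z x :
  Eset z :&: face x = if x.1 == z then [set hedge x; hedge (x.1, ordS x.2)] else set0.
Proof.
apply/setP => e; rewrite !inE -!orbA !andb_orr.
have mem_eq f : (e \in Eset z) && (e == f) = (e == f) && (f \in Eset z).
  by case: eqP => [->|]; rewrite ?andbT ?andbF.
rewrite !mem_eq !mem_Eset_hedge !(negbTE (vedge_notin_Eset _ _)) !andbF orbF /=.
by case: (x.1 == z); rewrite ?inE ?andbT ?andbF.
Qed.

Lemma odd_card_Eset_face z x : ~~ odd #|Eset z :&: face x|.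
Proof.
case: x => x1 x2; rewrite Eset_face /=; case: (x1 == z); last by rewrite cards0.
rewrite cards2; case: eqP => // /hedge_inj [] /esym/eqP.
by rewrite (negbTE (ordS_neq _ two_n1_gt1)).
Qed.

Lemma Rt_adj_odd_card_Eset z M M' :
  Rt_adj m n M M' -> odd #|Eset z :&: M| = odd #|Eset z :&: M'|.
Proof.
case/and3P => _ _ /imsetP[x _ symD_face].
have := odd_card_Eset_face z x.
by rewrite -symD_face odd_card_setI_symD negb_add => /eqP.
Qed.

Lemma Eset_bigcup z (P : pred 'I_(2 * m)) :
  Eset z :&: \bigcup_(k | P k) Eset k = if P z then Eset z else set0.
Proof.
apply/setP => e; rewrite inE; case: (boolP (e \in Eset z)) => [e_z|]; last first.
  by case: (P z); rewrite ?inE // => /negbTE ->.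
rewrite andTb; case: ifP => P_z; rewrite ?e_z ?inE; apply/bigcupP; first by exists z.
have [j _ ->] := imsetP e_z; case=> k P_k.
by rewrite mem_Eset_hedge => /eqP /= z_k; rewrite -z_k P_z in P_k.
Qed.

Lemma card_Eset z : #|Eset z| = 2 * n + 1.
Proof. by rewrite card_imset ?cardsT ?card_ord // => j j' /hedge_inj []. Qed.

End TotalResonance.

Theorem lemma4p1 (n m : nat) :
  1 <= n -> 2 <= m ->
  [/\ perfect_matching m n (M1 m n), perfect_matching m n (M2 m n) &
      ~~ connect (Rt_adj m n) (M1 m n) (M2 m n)].
Proof.
move=> n_gt0 m_gt1; split; [exact: perfect_matching_M1 | exact: perfect_matching_M2 |].
have m2_gt0 : 0 < 2 * m by lia.
pose z0 := Ordinal m2_gt0.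
pose parity := [pred M | odd #|@Eset m n z0 :&: M|].
have parity_closed : closed (Rt_adj m n) parity.
  by move=> M M' /(Rt_adj_odd_card_Eset m_gt1 n_gt0 z0).
apply/negP => /(closed_connect parity_closed).
rewrite !inE /M1 /M2 !Eset_bigcup //= card_Eset // cards0.
by rewrite addn1 /= oddM.
Qed.
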